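(* Let $\alpha\in(1/3,1)$ and $v\in\mathcal{C}^\alpha(\mathbb{R}^d)$. Let $\varepsilon>0$ with $(2+\varepsilon)\alpha>1$ and let $F\in C^{2+\varepsilon}(\mathbb{R}^d,\mathbb{R})$. Then for all $t\in[0,1]$ the limit $\lim_{N\to\infty}\int_0^tS_N(\mathrm{D}F(v))(s)\,d(S_Nv)(s)$ exists and \[ F(v(t))-F(v(0))=\lim_{N\to\infty}\int_0^tS_N(\mathrm{D}F(v))(s)\,d(S_Nv)(s). \] (No assumption on the Lévy area of $v$ is needed.)
   Context: Index set: pairs $(p,m)$ with either $p=-1,m=0$, or $p\in\mathbb{N}=\{0,1,2,\dots\}$ and $0\le m\le 2^p$. For $p\in\mathbb{N}$, $1\le m\le 2^p$ set $t^0_{pm}=(m-1)2^{-p}$, $t^1_{pm}=(2m-1)2^{-p-1}$, $t^2_{pm}=m2^{-p}$. Rescaled Haar functions: for $p\in\mathbb{N}$, $1\le m\le 2^p$, $\chi_{pm}=2^p$ on $[t^0_{pm},t^1_{pm})$, $=-2^p$ on $[t^1_{pm},t^2_{pm})$, $=0$ elsewhere; $\chi_{00}\equiv1$; $\chi_{p0}\equiv0$ for $p\ge1$. Rescaled Schauder functions: $\varphi_{pm}(t)=\int_0^t\chi_{pm}(s)\,ds$ for $p\in\mathbb{N}$, and $\varphi_{-10}\equiv1$. For continuous $f:[0,1]\to E$ ($E$ a finite-dimensional normed space), coefficients: $f_{-10}=f(0)$, $f_{00}=f(1)-f(0)$, $f_{p0}=0$ for $p\ge1$, $f_{pm}=2f(t^1_{pm})-f(t^0_{pm})-f(t^2_{pm})$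 for $p\in\mathbb{N},m\ge1$. $\Delta_pf=\sum_{m=0}^{2^p}f_{pm}\varphi_{pm}$, $S_Nf=\sum_{p=-1}^N\Delta_pf$ (the piecewise linear interpolation of $f$ at the points $k2^{-N-1}$). For $\alpha>0$, $\|f\|_\alpha:=\sup_{p,m}2^{p\alpha}|f_{pm}|$ and $\mathcal{C}^\alpha(E):=\{f\in C([0,1],E):\|f\|_\alpha<\infty\}$. For Lipschitz $g$, $\int_0^tf\,dg:=\int_0^tf(s)g'(s)\,ds$. $C^{2+\varepsilon}$: twice continuously differentiable with locally $\varepsilon$-Hölder second derivative (for $\varepsilon\in(0,1)$). $\mathrm{D}F$ is the gradient, viewed as an element of $L(\mathbb{R}^d,\mathbb{R})$. *)

From Stdlib Require Import Reals Lra Lia List.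
Open Scope R_scope.

(* Vectors of R^d are represented as functions nat -> R; only the
   coordinates i < d matter. *)

Fixpoint sumd (d : nat) (h : nat -> R) : R :=
  match d with O => 0 | S k => sumd k h + h k end.

Fixpoint nrm (d : nat) (x : nat -> R) : R :=
  match d with O => 0 | S k => Rmax (nrm k x) (Rabs (x k)) end.

Definition vadd (x y : nat -> R) : nat -> R := fun i => x i + y i.
Definition vsub (x y : nat -> R) : nat -> R := fun i => x i - y i.

Definition rpow (r a : R) : R := if Rlt_dec 0 r then Rpower r a else 0.

Definition tt0 (p m : nat) : R := INR (m - 1) / 2 ^ p.
Definition tt1 (p m : nat) : R := INR (2 * m - 1) / 2 ^ (S p).
Definition tt2 (p m : nat) : R := INR m / 2 ^ p.

Definition chi (p m : nat) (s : R) : R :=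
  match m with
  | O => match p with O => 1 | S _ => 0 end
  | S _ =>
    if Rle_dec (tt0 p m) s then
      if Rlt_dec s (tt1 p m) then 2 ^ p
      else if Rlt_dec s (tt2 p m) then - 2 ^ p else 0
    else 0
  end.

(* Rescaled Schauder functions phi_{pm}(t) = int_0^t chi_{pm}(s) ds,
   written in closed form (p in N, 0 <= m <= 2^p):
   phi_{00}(t) = t, phi_{p0} = 0 for p >= 1, and for m >= 1 the hat
   function supported on [t0,t2] with peak 1/2 at t1. *)
Definition phi (p m : nat) (t : R) : R :=
  match m with
  | O => match p with O => t | S _ => 0 end
  | S _ =>
    if Rle_dec t (tt0 p m) then 0
    else if Rle_dec t (tt1 p m) then 2 ^ p * (t - tt0 p m)
    else if Rle_dec t (tt2 p m) then 2 ^ p * (tt2 p m - t)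
    else 0
  end.
(* phi_{-1,0} = 1 is handled separately in SN below. *)

Definition coef (f : R -> R) (p m : nat) : R :=
  match m with
  | O => match p with O => f 1 - f 0 | S _ => 0 end
  | S _ => 2 * f (tt1 p m) - f (tt0 p m) - f (tt2 p m)
  end.
(* f_{-1,0} = f 0 *)

(* S_N f = sum_{p=-1}^N Delta_p f, Delta_p f = sum_{m=0}^{2^p} f_{pm} phi_{pm};
   for real-valued f (vector-valued functions are treated componentwise). *)
Definition SN (f : R -> R) (N : nat) (t : R) : R :=
  f 0 * 1 +
  sum_f_R0 (fun p => sum_f_R0 (fun m => coef f p m * phi p m t) (Nat.pow 2 p)) N.

Definition SNv (f : R -> nat -> R) (N : nat) : R -> nat -> R :=
  fun t i => SN (fun u => f u i) N t.

Definition coefv (f : R -> nat -> R) (p m : nat) : nat -> R :=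
  fun i => coef (fun u => f u i) p m.

(* f in C^alpha(R^d): f continuous on [0,1] and
   ||f||_alpha = sup_{p,m} 2^{p alpha} |f_{pm}| < infinity
   (the index p = -1 contributes 2^{-alpha} |f(0)|). *)
Definition continuous_on01 (g : R -> R) : Prop :=
  forall t, 0 <= t <= 1 -> forall e, e > 0 -> exists delta, delta > 0 /\
    forall s, 0 <= s <= 1 -> Rabs (s - t) < delta -> Rabs (g s - g t) < e.

Definition CalphaV (d : nat) (alpha : R) (f : R -> nat -> R) : Prop :=
  (forall i, (i < d)%nat -> continuous_on01 (fun t => f t i)) /\
  exists C : R,
    Rpower 2 (- alpha) * nrm d (f 0) <= C /\
    forall p m : nat, (m <= Nat.pow 2 p)%nat ->
      Rpower 2 (INR p * alpha) * nrm d (coefv f p m) <= C.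

(* F : R^d -> R is C^{2+eps}, with gradient DF (DF i = i-th partial
   derivative) and Hessian D2F: F is (Frechet) differentiable with
   derivative h |-> sum_i DF i x * h i, each DF i is differentiable with
   derivative h |-> sum_j D2F i j x * h j, the D2F i j are continuous and
   locally eps-Hoelder (eps-Hoelder on every bounded set). *)
Definition FrechetD (d : nat) (G : (nat -> R) -> R) (DG : nat -> (nat -> R) -> R)
  : Prop :=
  forall x e, e > 0 -> exists delta, delta > 0 /\
    forall h, nrm d h < delta ->
      Rabs (G (vadd x h) - G x - sumd d (fun i => DG i x * h i)) <= e * nrm d h.

Definition C2eps (d : nat) (eps : R) (F : (nat -> R) -> R)
  (DF : nat -> (nat -> R) -> R) (D2F : nat -> nat -> (nat -> R) -> R) : Prop :=
  FrechetD d F DF /\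
  (forall i, (i < d)%nat -> FrechetD d (DF i) (D2F i)) /\
  (forall i j, (i < d)%nat -> (j < d)%nat ->
     forall x e, e > 0 -> exists delta, delta > 0 /\
       forall y, nrm d (vsub y x) < delta -> Rabs (D2F i j y - D2F i j x) < e) /\
  (forall i j, (i < d)%nat -> (j < d)%nat ->
     forall K, K > 0 -> exists C, forall x y, nrm d x <= K -> nrm d y <= K ->
       Rabs (D2F i j x - D2F i j y) <= C * rpow (nrm d (vsub x y)) eps).

(* IntFdG d f g t I : the integral int_0^t f dg := int_0^t f(s) g'(s) ds
   (with f(s) in L(R^d,R) ~ R^d, so the integrand is sum_i f_i(s) g_i'(s))
   exists as a Riemann integral and equals I.  g' is any function agreeing
   with the derivative of g on (0,t) outside a finite set of points
   (Riemann integrals do not see finitely many points, so I is uniquely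
   determined). *)
Definition IntFdG (d : nat) (f g : R -> nat -> R) (t I : R) : Prop :=
  exists (gp : R -> nat -> R) (l : list R),
    (forall s, 0 < s < t -> ~ In s l -> forall i, (i < d)%nat ->
       derivable_pt_lim (fun u => g u i) s (gp s i)) /\
    exists pr : Riemann_integrable (fun s => sumd d (fun i => f s i * gp s i)) 0 t,
      RiemannInt pr = I.

(* On the dyadic grid of mesh [2^-(N+1)], [S_N g] is the piecewise linear interpolation of [g],
   so over a full cell [[a, b]] the integral of [S_N (DF v)] against [S_N v] is exactly the
   trapezoid rule [<(DF (v a) + DF (v b)) / 2, v b - v a>] for [F (v b) - F (v a)].  Being
   symmetric in the endpoints, the trapezoid rule has no second-order error, and no Levy area
   appears: for [F] of class [C^(2+eps)] the error is [O(|v b - v a|^(2+eps))].  The Schauder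
   bound gives [|v b - v a| = O(2^-((N+1) alpha))], so the [2^(N+1)] cell errors add up to
   [O(q^(N+1))] with [q = 2^(1 - (2+eps) alpha) < 1].  What remains is a telescoping sum of
   [F (v b) - F (v a)] up to the cell containing [t], plus a partial cell that vanishes by
   continuity. *)

From Stdlib Require Import Reals List Lra Lia FunctionalExtensionality.
From Coquelicot Require Import Coquelicot.
Open Scope R_scope.

Lemma sumd_ext d f g : (forall i, (i < d)%nat -> f i = g i) -> sumd d f = sumd d g.
Proof.
  induction d as [|d IH]; intros H; simpl; auto.
  rewrite IH by (intros; apply H; lia).
  rewrite H by lia; reflexivity.
Qed.

Lemma sumd_plus d f g : sumd d (fun i => f i + g i) = sumd d f + sumd d g.
Proof. induction d as [|d IH]; simpl; [ring | rewrite IH; ring]. Qed.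

Lemma sumd_minus d f g : sumd d (fun i => f i - g i) = sumd d f - sumd d g.
Proof. induction d as [|d IH]; simpl; [ring | rewrite IH; ring]. Qed.

Lemma sumd_scal d c f : sumd d (fun i => c * f i) = c * sumd d f.
Proof. induction d as [|d IH]; simpl; [ring | rewrite IH; ring]. Qed.

Lemma sumd_telescope k (u : nat -> R) : sumd k (fun j => u (S j) - u j) = u k - u O.
Proof. induction k as [|k IH]; simpl; [ring | rewrite IH; ring]. Qed.

Lemma sumd_le d f g : (forall i, (i < d)%nat -> f i <= g i) -> sumd d f <= sumd d g.
Proof.
  induction d as [|d IH]; intros H; simpl; [lra|].
  pose proof (IH (fun i Hi => H i ltac:(lia))); pose proof (H d ltac:(lia)); lra.
Qed.

Lemma sumd_nonneg d f : (forall i, (i < d)%nat -> 0 <= f i) -> 0 <= sumd d f.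
Proof.
  induction d as [|d IH]; intros H; simpl; [lra|].
  pose proof (IH (fun i Hi => H i ltac:(lia))); pose proof (H d ltac:(lia)); lra.
Qed.

Lemma Rabs_sumd_le d f : Rabs (sumd d f) <= sumd d (fun i => Rabs (f i)).
Proof.
  induction d as [|d IH]; simpl; [rewrite Rabs_R0; lra|].
  eapply Rle_trans; [apply Rabs_triang | lra].
Qed.

Lemma Rabs_sumd_le_const d f c :
  (forall i, (i < d)%nat -> Rabs (f i) <= c) -> Rabs (sumd d f) <= INR d * c.
Proof.
  induction d as [|d IH]; intros H; cbn [sumd]; [rewrite Rabs_R0; simpl; lra|].
  rewrite S_INR; eapply Rle_trans; [apply Rabs_triang|].
  pose proof (IH (fun i Hi => H i ltac:(lia))); pose proof (H d ltac:(lia)); lra.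
Qed.

Lemma sumd_single d (u : nat -> R) j :
  (forall i, (i < d)%nat -> i <> j -> u i = 0) -> (j < d)%nat -> sumd d u = u j.
Proof.
  induction d as [|d IH]; intros H Hj; cbn [sumd]; [lia|].
  destruct (Nat.eq_dec j d) as [->|Hne].
  - rewrite (sumd_ext d u (fun _ => 0)) by (intros; apply H; lia).
    clear; induction d; simpl; lra.
  - rewrite IH, (H d) by (try intros; try apply H; lia); ring.
Qed.

Lemma sum_f_R0_sumd G N : sum_f_R0 G N = sumd (S N) G.
Proof. induction N as [|N IH]; [simpl; ring | rewrite tech5, IH; reflexivity]. Qed.

Lemma nrm_nonneg d x : 0 <= nrm d x.
Proof.
  induction d as [|d IH]; simpl; [lra|].
  eapply Rle_trans; [apply IH | apply Rmax_l].
Qed.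

Lemma Rabs_le_nrm d x i : (i < d)%nat -> Rabs (x i) <= nrm d x.
Proof.
  induction d as [|d IH]; intros Hi; simpl; [lia|].
  destruct (Nat.eq_dec i d) as [->|Hne]; [apply Rmax_r|].
  eapply Rle_trans; [apply IH; lia | apply Rmax_l].
Qed.

Lemma nrm_le d x c : 0 <= c -> (forall i, (i < d)%nat -> Rabs (x i) <= c) -> nrm d x <= c.
Proof.
  induction d as [|d IH]; intros Hc H; simpl; [lra|].
  apply Rmax_lub; [apply IH | apply H]; auto.
Qed.

Lemma nrm_ext d x y : (forall i, (i < d)%nat -> x i = y i) -> nrm d x = nrm d y.
Proof.
  induction d as [|d IH]; intros H; simpl; auto.
  rewrite IH by (intros; apply H; lia).
  rewrite H by lia; reflexivity.
Qed.

Lemma nrm_scal d c x : nrm d (fun i => c * x i) = Rabs c * nrm d x.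
Proof.
  induction d as [|d IH]; simpl; [ring|].
  rewrite IH, Rabs_mult.
  pose proof (Rabs_pos c); unfold Rmax.
  destruct (Rle_dec (nrm d x) (Rabs (x d))), Rle_dec; nra.
Qed.

Lemma ex_uniform_bound d (P : nat -> R -> Prop) :
  (forall i, (i < d)%nat -> exists C, P i C) ->
  (forall i C C', P i C -> C <= C' -> P i C') ->
  exists C, 0 <= C /\ forall i, (i < d)%nat -> P i C.
Proof.
  intros H Hmono; induction d as [|d IH].
  - exists 0; split; [lra | intros; lia].
  - destruct IH as [C1 [HC1 H1]]; [intros; apply H; lia|].
    destruct (H d ltac:(lia)) as [C2 H2].
    exists (Rmax C1 C2); split; [eapply Rle_trans; [apply HC1 | apply Rmax_l]|].
    intros i Hi; destruct (Nat.eq_dec i d) as [->|Hne].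
    + eapply Hmono; [apply H2 | apply Rmax_r].
    + eapply Hmono; [apply H1; lia | apply Rmax_l].
Qed.

Lemma ex_uniform_delta d (Q : nat -> R -> Prop) :
  (forall i, (i < d)%nat -> exists del, del > 0 /\ Q i del) ->
  (forall i del del', Q i del -> 0 < del' <= del -> Q i del') ->
  exists del, del > 0 /\ forall i, (i < d)%nat -> Q i del.
Proof.
  intros H Hmono; induction d as [|d IH].
  - exists 1; split; [lra | intros; lia].
  - destruct IH as [d1 [Hd1 H1]]; [intros; apply H; lia|].
    destruct (H d ltac:(lia)) as [d2 [Hd2 H2]].
    pose proof (Rmin_pos _ _ Hd1 Hd2).
    exists (Rmin d1 d2); split; [lra|].
    intros i Hi; destruct (Nat.eq_dec i d) as [->|Hne].
    + eapply Hmono; [apply H2 | split; [lra | apply Rmin_r]].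
    + eapply Hmono; [apply H1; lia | split; [lra | apply Rmin_l]].
Qed.

Lemma derivable_pt_lim_ext_eq f g x l l' :
  (forall y, f y = g y) -> l = l' -> derivable_pt_lim f x l -> derivable_pt_lim g x l'.
Proof.
  intros Hfg <- D.
  replace g with f by (apply functional_extensionality; exact Hfg); exact D.
Qed.

Lemma derivable_pt_lim_sumd d (f : nat -> R -> R) l s :
  (forall i, (i < d)%nat -> derivable_pt_lim (f i) s (l i)) ->
  derivable_pt_lim (fun u => sumd d (fun i => f i u)) s (sumd d l).
Proof.
  induction d as [|d IH]; intros H; cbn [sumd].
  - apply derivable_pt_lim_const.
  - apply (derivable_pt_lim_ext_eq ((fun u => sumd d (fun i => f i u)) + f d)%F _ _
             (sumd d l + l d)); [reflexivity | reflexivity|].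
    apply derivable_pt_lim_plus; [apply IH; intros | ]; apply H; lia.
Qed.

Lemma FrechetD_derivable_on_line d G DG : FrechetD d G DG -> forall x h tau,
  derivable_pt_lim (fun s => G (fun i => x i + s * h i)) tau
    (sumd d (fun i => DG i (fun i => x i + tau * h i) * h i)).
Proof.
  intros HG x h tau e He.
  set (y := fun i => x i + tau * h i).
  set (nh := nrm d h); assert (Hnh : 0 <= nh) by apply nrm_nonneg.
  destruct (HG y (e / (2 * (nh + 1)))) as [del [Hdel H]];
    [apply Rdiv_lt_0_compat; lra|].
  assert (Hpos : 0 < del / (nh + 1)) by (apply Rdiv_lt_0_compat; lra).
  exists (mkposreal _ Hpos); simpl; intros u Hu Hlt.
  assert (Hu' : 0 < Rabs u) by (apply Rabs_pos_lt; exact Hu).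
  specialize (H (fun i => u * h i)); rewrite nrm_scal in H; fold nh in H.
  assert (Hsmall : Rabs u * nh < del).
  { apply Rle_lt_trans with (Rabs u * (nh + 1)); [nra|].
    apply Rmult_lt_reg_r with (/ (nh + 1)); [apply Rinv_0_lt_compat; lra|].
    rewrite Rmult_assoc, Rinv_r by lra; lra. }
  specialize (H Hsmall).
  replace (fun i => x i + (tau + u) * h i) with (vadd y (fun i => u * h i))
    by (apply functional_extensionality; intros i; unfold vadd, y; ring).
  rewrite (sumd_ext _ _ (fun i => u * (DG i y * h i))), sumd_scal in H by (intros; ring).
  replace ((G (vadd y (fun i => u * h i)) - G y) / u - sumd d (fun i => DG i y * h i))
    with ((G (vadd y (fun i => u * h i)) - G y - u * sumd d (fun i => DG i y * h i)) / u)
    by (field; exact Hu).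
  unfold Rdiv; rewrite Rabs_mult, Rabs_inv.
  apply Rle_lt_trans with (e / (2 * (nh + 1)) * nh); [|].
  - apply Rmult_le_reg_r with (Rabs u); [exact Hu'|].
    rewrite Rmult_assoc, Rinv_l by lra; lra.
  - apply Rmult_lt_reg_r with (2 * (nh + 1)); [lra|].
    replace (e / (2 * (nh + 1)) * nh * (2 * (nh + 1))) with (e * nh) by (field; lra).
    nra.
Qed.

Lemma FrechetD_continuous d G DG : FrechetD d G DG -> forall x e, e > 0 ->
  exists del, del > 0 /\ forall y, nrm d (vsub y x) < del -> Rabs (G y - G x) < e.
Proof.
  intros HG x e He.
  destruct (HG x 1 ltac:(lra)) as [d1 [Hd1 H]].
  set (S := sumd d (fun i => Rabs (DG i x))).
  assert (HS : 0 <= S) by (apply sumd_nonneg; intros; apply Rabs_pos).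
  assert (Hd2 : 0 < e / (S + 2)) by (apply Rdiv_lt_0_compat; lra).
  exists (Rmin d1 (e / (S + 2))); split; [apply Rmin_pos; lra|].
  intros y Hy; set (h := vsub y x) in *.
  pose proof (Rmin_l d1 (e / (S + 2))); pose proof (Rmin_r d1 (e / (S + 2))).
  assert (Hh : 0 <= nrm d h) by apply nrm_nonneg.
  specialize (H h ltac:(lra)).
  replace (vadd x h) with y in H
    by (apply functional_extensionality; intro; unfold h, vadd, vsub; ring).
  assert (Hlin : Rabs (sumd d (fun i => DG i x * h i)) <= S * nrm d h).
  { eapply Rle_trans; [apply Rabs_sumd_le|].
    unfold S; rewrite Rmult_comm, <- sumd_scal; apply sumd_le; intros i Hi.
    rewrite Rabs_mult; pose proof (Rabs_le_nrm d h i Hi); pose proof (Rabs_pos (DG i x)); nra. }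
  pose proof (Rabs_triang (G y - G x - sumd d (fun i => DG i x * h i))
                          (sumd d (fun i => DG i x * h i))) as Htri.
  replace (G y - G x - sumd d (fun i => DG i x * h i) + sumd d (fun i => DG i x * h i))
    with (G y - G x) in Htri by ring.
  apply Rle_lt_trans with ((S + 2) * nrm d h); [nra|].
  apply Rmult_lt_reg_r with (/ (S + 2)); [apply Rinv_0_lt_compat; lra|].
  replace ((S + 2) * nrm d h * / (S + 2)) with (nrm d h) by (field; lra).
  replace (e * / (S + 2)) with (e / (S + 2)) by reflexivity; lra.
Qed.

(* The error [E tau := phi tau - phi 0 - tau (psi 0 + psi tau) / 2] vanishes at [0] and, by the
   mean value theorem for [psi], has derivative [tau (psi2 c - psi2 tau) / 2]. *)
Lemma trapezoid_error_le (phi psi psi2 : R -> R) L :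
  (forall tau, 0 <= tau <= 1 -> derivable_pt_lim phi tau (psi tau)) ->
  (forall tau, 0 <= tau <= 1 -> derivable_pt_lim psi tau (psi2 tau)) ->
  (forall a b, 0 <= a <= 1 -> 0 <= b <= 1 -> Rabs (psi2 a - psi2 b) <= L) ->
  Rabs (phi 1 - phi 0 - (psi 0 + psi 1) / 2) <= L / 2.
Proof.
  intros Hphi Hpsi Hosc.
  set (E := fun tau => phi tau - phi 0 - tau * (psi 0 + psi tau) / 2).
  set (E' := fun tau => psi tau - ((psi 0 + psi tau) / 2 + tau * psi2 tau / 2)).
  assert (HE : forall tau, 0 <= tau <= 1 -> derivable_pt_lim E tau (E' tau)).
  { intros tau Ht.
    eapply (derivable_pt_lim_ext_eq
      ((phi - fct_cte (phi 0)) - (id * ((fct_cte (psi 0) + psi) * fct_cte (/ 2))))%F);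
      cycle 2.
    - repeat first [ apply derivable_pt_lim_minus | apply derivable_pt_lim_mult
                   | apply derivable_pt_lim_plus | apply derivable_pt_lim_const
                   | apply derivable_pt_lim_id | apply Hphi; exact Ht | apply Hpsi; exact Ht ].
    - intros y; unfold E, minus_fct, mult_fct, plus_fct, fct_cte, id; field.
    - unfold E', minus_fct, mult_fct, plus_fct, fct_cte, id; field. }
  assert (HE' : forall tau, 0 <= tau <= 1 -> Rabs (E' tau) <= L / 2).
  { intros tau Ht; pose proof (Hosc 0 0 ltac:(lra) ltac:(lra)) as HL.
    pose proof (Rabs_pos (psi2 0 - psi2 0)).
    destruct (Req_dec tau 0) as [->|Hne].
    - unfold E'; replace (psi 0 - ((psi 0 + psi 0) / 2 + 0 * psi2 0 / 2)) with 0 by field.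
      rewrite Rabs_R0; lra.
    - destruct (MVT_cor2 psi psi2 0 tau ltac:(lra)) as [c [Hc Hc01]];
        [intros; apply Hpsi; lra|].
      unfold E'; replace (psi tau - ((psi 0 + psi tau) / 2 + tau * psi2 tau / 2))
        with (tau * (psi2 c - psi2 tau) / 2)
        by (replace (psi tau) with (psi 0 + psi2 c * (tau - 0)) by lra; field).
      unfold Rdiv; rewrite !Rabs_mult, (Rabs_right tau), (Rabs_right (/ 2)) by lra.
      pose proof (Hosc c tau ltac:(lra) ltac:(lra)); pose proof (Rabs_pos (psi2 c - psi2 tau)).
      nra. }
  destruct (MVT_cor2 E E' 0 1 ltac:(lra)) as [c [Hc Hc01]]; [intros; apply HE; lra|].
  replace (phi 1 - phi 0 - (psi 0 + psi 1) / 2) with (E 1 - E 0) by (unfold E; field).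
  rewrite Hc, Rminus_0_r, Rmult_1_r; apply HE'; lra.
Qed.

Lemma Rpower_pos x y : 0 < Rpower x y.
Proof. apply exp_pos. Qed.

Lemma rpow_nonneg a e : 0 <= rpow a e.
Proof. unfold rpow; destruct Rlt_dec; [left; apply Rpower_pos | lra]. Qed.

Lemma rpow_le_compat a b e : 0 <= a <= b -> 0 < e -> rpow a e <= rpow b e.
Proof.
  intros Hab He; unfold rpow.
  destruct (Rlt_dec 0 a), (Rlt_dec 0 b); try lra.
  - apply Rle_Rpower_l; lra.
  - left; apply Rpower_pos.
Qed.

Lemma rpow_pos_eq a e : 0 < a -> rpow a e = Rpower a e.
Proof. intros Ha; unfold rpow; destruct Rlt_dec; [reflexivity | lra]. Qed.

Lemma nrm_segment_le d x y K tau : nrm d x <= K -> nrm d y <= K -> 0 <= tau <= 1 ->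
  nrm d (fun i => x i + tau * (y i - x i)) <= K.
Proof.
  intros Hx Hy Ht; pose proof (nrm_nonneg d x).
  apply nrm_le; [lra|]; intros i Hi.
  replace (x i + tau * (y i - x i)) with ((1 - tau) * x i + tau * y i) by ring.
  eapply Rle_trans; [apply Rabs_triang|].
  rewrite !Rabs_mult, (Rabs_right (1 - tau)), (Rabs_right tau) by lra.
  pose proof (Rabs_le_nrm d x i Hi); pose proof (Rabs_le_nrm d y i Hi); nra.
Qed.

Lemma hessian_form_diff_le d (Q1 Q2 : nat -> nat -> R) h c :
  (forall i j, (i < d)%nat -> (j < d)%nat -> Rabs (Q1 i j - Q2 i j) <= c) ->
  Rabs (sumd d (fun i => sumd d (fun j => Q1 i j * h j) * h i)
        - sumd d (fun i => sumd d (fun j => Q2 i j * h j) * h i))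
    <= INR d * (INR d * (c * nrm d h)) * nrm d h.
Proof.
  intros HQ; rewrite <- sumd_minus, Rmult_assoc; apply Rabs_sumd_le_const; intros i Hi.
  rewrite <- Rmult_minus_distr_r, <- sumd_minus, Rabs_mult.
  apply Rmult_le_compat; try apply Rabs_pos; [|apply Rabs_le_nrm; exact Hi].
  apply Rabs_sumd_le_const; intros j Hj.
  rewrite <- Rmult_minus_distr_r, Rabs_mult.
  apply Rmult_le_compat; try apply Rabs_pos; [apply HQ; assumption | apply Rabs_le_nrm; exact Hj].
Qed.

Section C2eps_trapezoid.
Variables (d : nat) (eps : R) (F : (nat -> R) -> R) (DF : nat -> (nat -> R) -> R)
  (D2F : nat -> nat -> (nat -> R) -> R).
Hypothesis HF : C2eps d eps F DF D2F.
Hypothesis Heps : eps > 0.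

Lemma C2eps_hessian_holder_uniform K : K > 0 ->
  exists Ch, 0 <= Ch /\ forall i j, (i < d)%nat -> (j < d)%nat ->
    forall x y, nrm d x <= K -> nrm d y <= K ->
      Rabs (D2F i j x - D2F i j y) <= Ch * rpow (nrm d (vsub x y)) eps.
Proof.
  destruct HF as [_ [_ [_ Hhold]]]; intros HK.
  set (P := fun i j C => forall x y, nrm d x <= K -> nrm d y <= K ->
         Rabs (D2F i j x - D2F i j y) <= C * rpow (nrm d (vsub x y)) eps).
  assert (Hmono : forall i j C C', P i j C -> C <= C' -> P i j C').
  { intros i j C C' HC HCC' x y Hx Hy.
    eapply Rle_trans; [apply HC; auto|].
    apply Rmult_le_compat_r; [apply rpow_nonneg | exact HCC']. }
  destruct (ex_uniform_bound d (fun i C => forall j, (j < d)%nat -> P i j C))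
    as [Ch [HCh0 HCh]].
  - intros i Hi.
    destruct (ex_uniform_bound d (P i)) as [C [_ HC]].
    + intros j Hj; exact (Hhold i j Hi Hj K HK).
    + apply Hmono.
    + exists C; exact HC.
  - intros i C C' HC HCC' j Hj; exact (Hmono i j C C' (HC j Hj) HCC').
  - exists Ch; split; [exact HCh0|].
    intros i j Hi Hj; exact (HCh i Hi j Hj).
Qed.

Lemma C2eps_trapezoid_error K : K > 0 ->
  exists Ct, 0 <= Ct /\ forall x y, nrm d x <= K -> nrm d y <= K ->
    Rabs (F y - F x - sumd d (fun i => (DF i x + DF i y) / 2 * (y i - x i)))
      <= Ct * rpow (nrm d (vsub y x)) eps * nrm d (vsub y x) ^ 2.
Proof.
  intros HK; destruct (C2eps_hessian_holder_uniform K HK) as [Ch [HCh0 HCh]].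
  pose proof (pos_INR d).
  exists (INR d * INR d * Ch / 2); split;
    [apply Rmult_le_pos; [|lra]; repeat apply Rmult_le_pos; lra|].
  intros x y Hx Hy.
  destruct HF as [HF1 [HDF _]].
  set (h := vsub y x); set (nh := nrm d h); assert (Hnh : 0 <= nh) by apply nrm_nonneg.
  set (z := fun tau i => x i + tau * h i).
  assert (Hz0 : z 0 = x) by (apply functional_extensionality; intro; unfold z; ring).
  assert (Hz1 : z 1 = y) by (apply functional_extensionality; intro; unfold z, h, vsub; ring).
  set (psi := fun tau => sumd d (fun i => DF i (z tau) * h i)).
  set (psi2 := fun tau => sumd d (fun i => sumd d (fun j => D2F i j (z tau) * h j) * h i)).
  assert (Hosc : forall a b, 0 <= a <= 1 -> 0 <= b <= 1 ->
            Rabs (psi2 a - psi2 b) <= INR d * (INR d * (Ch * rpow nh eps * nh)) * nh).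
  { intros a b Ha Hb; apply hessian_form_diff_le; intros i j Hi Hj.
    eapply Rle_trans; [apply HCh; auto; apply nrm_segment_le; auto|].
    apply Rmult_le_compat_l; [exact HCh0|].
    apply rpow_le_compat; [split; [apply nrm_nonneg|] | exact Heps].
    replace (nrm d (vsub (z a) (z b))) with (Rabs (a - b) * nh)
      by (unfold nh; rewrite <- nrm_scal; apply nrm_ext; intros; unfold vsub, z; ring).
    assert (Rabs (a - b) <= 1) by (apply Rabs_le; lra); pose proof (Rabs_pos (a - b)); nra. }
  assert (Hpsi : forall tau, 0 <= tau <= 1 -> derivable_pt_lim psi tau (psi2 tau)).
  { intros tau Ht; unfold psi, psi2; apply derivable_pt_lim_sumd; intros i Hi.
    eapply (derivable_pt_lim_ext_eq (mult_real_fct (h i) (fun s => DF i (z s))));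
      [intros; unfold mult_real_fct; ring | |
       apply derivable_pt_lim_scal, (FrechetD_derivable_on_line d (DF i) (D2F i) (HDF i Hi))].
    unfold z; ring. }
  pose proof (trapezoid_error_le (fun tau => F (z tau)) psi psi2 _
    (fun tau _ => FrechetD_derivable_on_line d F DF HF1 x h tau) Hpsi Hosc) as Htrap.
  cbv beta in Htrap; rewrite Hz0, Hz1 in Htrap.
  replace ((psi 0 + psi 1) / 2) with (sumd d (fun i => (DF i x + DF i y) / 2 * (y i - x i)))
    in Htrap.
  - eapply Rle_trans; [exact Htrap|].
    right; fold h nh; simpl; field.
  - unfold psi; rewrite Hz0, Hz1, <- sumd_plus.
    unfold Rdiv; rewrite Rmult_comm, <- sumd_scal; apply sumd_ext; intros i Hi.
    unfold h, vsub; ring.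
Qed.
End C2eps_trapezoid.

Definition dyadic (n k : nat) : R := INR k / 2 ^ n.

Lemma pow2_pos n : 0 < 2 ^ n.
Proof. apply pow_lt; lra. Qed.

Lemma dyadic_le n a b : (a <= b)%nat -> dyadic n a <= dyadic n b.
Proof.
  intros H; apply Rmult_le_compat_r; [left; apply Rinv_0_lt_compat, pow2_pos | apply le_INR, H].
Qed.

Lemma dyadic_S n k : dyadic n (S k) = dyadic n k + / 2 ^ n.
Proof. unfold dyadic; rewrite S_INR; field; apply pow_nonzero; lra. Qed.

Lemma dyadic_0 n : dyadic n 0 = 0.
Proof. unfold dyadic; simpl; field; apply pow_nonzero; lra. Qed.

Lemma dyadic_top n : dyadic n (Nat.pow 2 n) = 1.
Proof.
  unfold dyadic; rewrite pow_INR; replace (INR 2) with 2 by (simpl; ring).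
  field; apply pow_nonzero; lra.
Qed.

Lemma dyadic_double n k : dyadic (S n) (2 * k) = dyadic n k.
Proof.
  unfold dyadic; rewrite mult_INR; replace (INR 2) with 2 by (simpl; ring).
  rewrite <- tech_pow_Rmult.
  field; apply pow_nonzero; lra.
Qed.

Lemma dyadic_double_S n k : dyadic (S n) (S (S (2 * k))) = dyadic n (S k).
Proof. replace (S (S (2 * k))) with (2 * S k)%nat by lia; apply dyadic_double. Qed.

Lemma dyadic_mid n k : dyadic (S n) (S (2 * k)) = (dyadic n k + dyadic n (S k)) / 2.
Proof.
  unfold dyadic; rewrite S_INR, mult_INR; replace (INR 2) with 2 by (simpl; ring).
  rewrite S_INR, <- tech_pow_Rmult.
  field; apply pow_nonzero; lra.
Qed.

Lemma tt0_S n k : tt0 n (S k) = dyadic n k.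
Proof. unfold tt0, dyadic; now replace (S k - 1)%nat with k by lia. Qed.

Lemma tt1_S n k : tt1 n (S k) = dyadic (S n) (S (2 * k)).
Proof. unfold tt1, dyadic; now replace (2 * S k - 1)%nat with (S (2 * k)) by lia. Qed.

Lemma coef_S f n k : coef f n (S k) =
  2 * f (dyadic (S n) (S (2 * k))) - f (dyadic n k) - f (dyadic n (S k)).
Proof. unfold coef; rewrite tt0_S, tt1_S; reflexivity. Qed.

Lemma phi_S n k s : phi n (S k) s =
  if Rle_dec s (dyadic n k) then 0
  else if Rle_dec s (dyadic (S n) (S (2 * k))) then 2 ^ n * (s - dyadic n k)
  else if Rle_dec s (dyadic n (S k)) then 2 ^ n * (dyadic n (S k) - s)
  else 0.
Proof. unfold phi; rewrite tt0_S, tt1_S; reflexivity. Qed.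

Lemma phi_outside_cell n m k s :
  dyadic n k <= s <= dyadic n (S k) -> m <> k -> phi n (S m) s = 0.
Proof.
  intros Hs Hm; rewrite phi_S, dyadic_mid.
  pose proof (dyadic_S n m); pose proof (Rinv_0_lt_compat _ (pow2_pos n)).
  destruct (Nat.lt_ge_cases m k).
  - assert (dyadic n (S m) <= dyadic n k) by (apply dyadic_le; lia).
    repeat destruct Rle_dec; try lra.
    replace s with (dyadic n (S m)) by lra; ring.
  - assert (dyadic n (S k) <= dyadic n m) by (apply dyadic_le; lia).
    destruct Rle_dec; [reflexivity | lra].
Qed.

Lemma phi_left n k s :
  dyadic n k <= s <= dyadic (S n) (S (2 * k)) -> phi n (S k) s = 2 ^ n * (s - dyadic n k).
Proof.
  intros Hs; rewrite phi_S.
  destruct Rle_dec; [replace s with (dyadic n k) by lra; ring|].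
  destruct Rle_dec; [reflexivity | lra].
Qed.

Lemma phi_right n k s :
  dyadic (S n) (S (2 * k)) <= s <= dyadic n (S k) ->
  phi n (S k) s = 2 ^ n * (dyadic n (S k) - s).
Proof.
  intros Hs; rewrite phi_S; rewrite dyadic_mid in *.
  pose proof (dyadic_S n k); pose proof (Rinv_0_lt_compat _ (pow2_pos n)).
  destruct Rle_dec; [lra|].
  destruct Rle_dec.
  - replace s with ((dyadic n k + dyadic n (S k)) / 2) by lra.
    replace (dyadic n (S k)) with (dyadic n k + / 2 ^ n) by lra.
    field; apply pow_nonzero; lra.
  - destruct Rle_dec; [reflexivity | lra].
Qed.

(* [Delta_p f] minus [f_00 phi_00], the only Schauder term not supported in a single
   dyadic cell of level [p]. *)
Definition hat_part (f : R -> R) (p : nat) (s : R) : R :=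
  sumd (Nat.pow 2 p) (fun m => coef f p (S m) * phi p (S m) s).

Lemma Delta_hat_part f p s :
  sum_f_R0 (fun m => coef f p m * phi p m s) (Nat.pow 2 p) =
  match p with O => (f 1 - f 0) * s | S _ => 0 end + hat_part f p s.
Proof.
  pose proof (Nat.pow_nonzero 2 p ltac:(lia)).
  rewrite decomp_sum by lia; unfold hat_part.
  replace (Nat.pow 2 p) with (S (pred (Nat.pow 2 p))) at 2 by lia.
  rewrite sum_f_R0_sumd; destruct p; simpl; ring.
Qed.

Lemma hat_part_on_cell f n k s : (k < Nat.pow 2 n)%nat ->
  dyadic n k <= s <= dyadic n (S k) -> hat_part f n s = coef f n (S k) * phi n (S k) s.
Proof.
  intros Hk Hs; unfold hat_part.
  apply (sumd_single _ (fun m => coef f n (S m) * phi n (S m) s)); [|exact Hk].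
  intros m _ Hm; rewrite (phi_outside_cell n m k s Hs Hm); ring.
Qed.

Lemma SN_hat_parts f N s :
  SN f N s = f 0 + (f 1 - f 0) * s + sumd (S N) (fun p => hat_part f p s).
Proof.
  unfold SN; rewrite sum_f_R0_sumd.
  rewrite (sumd_ext _ _ (fun p => match p with O => (f 1 - f 0) * s | S _ => 0 end
                                  + hat_part f p s)) by (intros; apply Delta_hat_part).
  rewrite sumd_plus; replace (sumd (S N) _) with ((f 1 - f 0) * s)
    by (induction N as [|N IH]; simpl in *; [ring | rewrite <- IH; ring]).
  ring.
Qed.

(* Adding the hat functions of level [n] turns the interpolation at the level-[n] grid
   into the interpolation at the level-[n+1] grid. *)
Lemma hat_parts_interpolate f n k s : (k < Nat.pow 2 n)%nat ->
  dyadic n k <= s <= dyadic n (S k) ->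
  f 0 + (f 1 - f 0) * s + sumd n (fun p => hat_part f p s) =
  f (dyadic n k) + (f (dyadic n (S k)) - f (dyadic n k)) * (s - dyadic n k) * 2 ^ n.
Proof.
  revert k s; induction n as [|n IH]; intros k' s Hk Hs.
  - simpl in Hk; replace k' with 0%nat by lia.
    rewrite dyadic_0; replace (dyadic 0 1) with 1 by (unfold dyadic; simpl; field).
    simpl; ring.
  - cbn [sumd]; rewrite <- Rplus_assoc.
    pose proof (pow2_pos n); pose proof (Rinv_0_lt_compat _ (pow2_pos n)).
    destruct (Nat.Even_or_Odd k') as [[k ->]|[k ->]];
      [|replace (2 * k + 1)%nat with (S (2 * k)) in * by lia];
      assert (Hk' : (k < Nat.pow 2 n)%nat) by (simpl in Hk; lia);
      pose proof (dyadic_S n k) as Hstep; pose proof (dyadic_mid n k) as Hmid.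
    + rewrite dyadic_double in *.
      assert (Hs' : dyadic n k <= s <= dyadic n (S k)) by lra.
      rewrite (IH k s Hk' Hs'), (hat_part_on_cell f n k s Hk' Hs'), phi_left by lra.
      rewrite coef_S; simpl; ring.
    + rewrite dyadic_double_S in *.
      assert (Hs' : dyadic n k <= s <= dyadic n (S k)) by lra.
      rewrite (IH k s Hk' Hs'), (hat_part_on_cell f n k s Hk' Hs'), phi_right by lra.
      rewrite coef_S, Hmid, Hstep; simpl; field; lra.
Qed.

Lemma SN_on_cell f N k s : (k < Nat.pow 2 (S N))%nat ->
  dyadic (S N) k <= s <= dyadic (S N) (S k) ->
  SN f N s = f (dyadic (S N) k)
             + (f (dyadic (S N) (S k)) - f (dyadic (S N) k)) * (s - dyadic (S N) k) * 2 ^ S N.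
Proof. intros Hk Hs; rewrite SN_hat_parts; apply hat_parts_interpolate; assumption. Qed.

Definition rho (alpha : R) : R := Rpower 2 (- alpha).

Lemma rho_bounds alpha : 0 < alpha < 1 -> 0 < rho alpha < 1 /\ 1 < 2 * rho alpha.
Proof.
  intros Ha; unfold rho; split; [split; [apply Rpower_pos|]|].
  - rewrite <- (Rpower_O 2) by lra; apply Rpower_lt; lra.
  - assert (Hlt : Rpower 2 (- (1)) < Rpower 2 (- alpha)) by (apply Rpower_lt; lra).
    rewrite Rpower_Ropp, Rpower_1 in Hlt by lra; lra.
Qed.

Lemma Rpower_mul_rho_pow alpha p : Rpower 2 (INR p * alpha) * rho alpha ^ p = 1.
Proof.
  unfold rho; rewrite <- Rpower_pow by apply Rpower_pos.
  rewrite Rpower_mult, <- Rpower_plus.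
  replace (INR p * alpha + - alpha * INR p) with 0 by ring; apply Rpower_O; lra.
Qed.

Section Hoelder_grid.
Variables (d : nat) (alpha C : R) (v : R -> nat -> R).
Hypothesis Ha : 0 < alpha < 1.
Hypothesis HC : forall p m : nat, (m <= Nat.pow 2 p)%nat ->
  Rpower 2 (INR p * alpha) * nrm d (coefv v p m) <= C.

Let r := rho alpha.

Lemma hoelder_const_nonneg : 0 <= C.
Proof.
  pose proof (HC 0 0 ltac:(simpl; lia)); pose proof (Rpower_pos 2 (INR 0 * alpha)).
  pose proof (nrm_nonneg d (coefv v 0 0)); nra.
Qed.

Lemma Rabs_coef_le p m i : (m <= Nat.pow 2 p)%nat -> (i < d)%nat ->
  Rabs (coef (fun u => v u i) p m) <= C * r ^ p.
Proof.
  intros Hm Hi.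
  pose proof (Rabs_le_nrm d (coefv v p m) i Hi) as Hcoord; unfold coefv in Hcoord.
  pose proof (Rpower_mul_rho_pow alpha p) as Hone; fold r in Hone.
  assert (0 < r ^ p) by (apply pow_lt; unfold r; apply Rpower_pos).
  apply Rle_trans with (r ^ p * (Rpower 2 (INR p * alpha) * nrm d (coefv v p m))).
  - unfold coefv; rewrite <- Rmult_assoc, (Rmult_comm (r ^ p)), Hone; lra.
  - rewrite Rmult_comm; apply Rmult_le_compat_r; [lra | exact (HC p m Hm)].
Qed.

(* An increment at level [n + 1] is half of its parent increment plus or minus half of a
   Schauder coefficient of level [n]; [incr_const] is chosen so that
   [(incr_const + C) / 2 <= incr_const * r], which propagates the bound [incr_const * r ^ n]. *)
Definition incr_const : R := C / (2 * r - 1) + 1.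

Lemma incr_const_spec : 0 < incr_const /\ C <= incr_const /\ C <= incr_const * (2 * r - 1).
Proof.
  destruct (rho_bounds alpha Ha) as [[Hr0 Hr1] Hr2]; fold r in Hr0, Hr1, Hr2.
  pose proof hoelder_const_nonneg.
  assert (HCr : C <= C / (2 * r - 1)).
  { apply Rmult_le_reg_r with (2 * r - 1); [lra|].
    unfold Rdiv; rewrite Rmult_assoc, Rinv_l by lra; nra. }
  unfold incr_const; repeat split; [lra | lra|].
  rewrite Rmult_plus_distr_r; unfold Rdiv; rewrite Rmult_assoc, Rinv_l by lra; lra.
Qed.

Lemma dyadic_increment_le n k i : (k < Nat.pow 2 n)%nat -> (i < d)%nat ->
  Rabs (v (dyadic n (S k)) i - v (dyadic n k) i) <= incr_const * r ^ n.
Proof.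
  intros Hk Hi; destruct (rho_bounds alpha Ha) as [[Hr0 Hr1] Hr2]; fold r in Hr0, Hr1, Hr2.
  destruct incr_const_spec as [HK0 [HKC HK]].
  revert k Hk; induction n as [|n IH]; intros k' Hk.
  - simpl in Hk; replace k' with 0%nat by lia.
    pose proof (Rabs_coef_le 0 0 i ltac:(simpl; lia) Hi) as Hcoef; simpl in Hcoef |- *.
    rewrite dyadic_0; replace (dyadic 0 1) with 1 by (unfold dyadic; simpl; field); lra.
  - assert (Hrn : 0 < r ^ n) by (apply pow_lt; lra).
    assert (Hrec : incr_const * r ^ n + C * r ^ n <= 2 * (incr_const * (r * r ^ n))).
    { assert (C * r ^ n <= incr_const * (2 * r - 1) * r ^ n) by (apply Rmult_le_compat_r; lra).
      lra. }
    destruct (Nat.Even_or_Odd k') as [[k ->]|[k ->]];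
      [|replace (2 * k + 1)%nat with (S (2 * k)) by lia];
      assert (Hk' : (k < Nat.pow 2 n)%nat) by (simpl in Hk; lia);
      pose proof (IH k Hk') as Hparent;
      pose proof (Rabs_coef_le n (S k) i Hk' Hi) as Hcoef; rewrite coef_S in Hcoef;
      apply Rabs_le_between in Hparent, Hcoef; apply Rabs_le_between;
      change (r ^ S n) with (r * r ^ n).
    + rewrite dyadic_double; lra.
    + rewrite dyadic_double_S; lra.
Qed.

Lemma Rabs_dyadic_le n k i : (k <= Nat.pow 2 n)%nat -> (i < d)%nat ->
  Rabs (v (dyadic n k) i)
    <= nrm d (v 0) + nrm d (v 1) + incr_const * (r - r ^ S n) / (1 - r).
Proof.
  destruct (rho_bounds alpha Ha) as [[Hr0 Hr1] Hr2]; fold r in Hr0, Hr1, Hr2.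
  destruct incr_const_spec as [HK0 _].
  pose proof (nrm_nonneg d (v 0)); pose proof (nrm_nonneg d (v 1)).
  revert k; induction n as [|n IH]; intros k' Hk Hi.
  - replace (incr_const * (r - r ^ 1) / (1 - r)) with 0 by (simpl; field; lra).
    simpl in Hk; destruct k' as [|[|]]; try lia.
    + rewrite dyadic_0; pose proof (Rabs_le_nrm d (v 0) i Hi); lra.
    + replace (dyadic 0 1) with 1 by (unfold dyadic; simpl; field).
      pose proof (Rabs_le_nrm d (v 1) i Hi); lra.
  - assert (Hrn : 0 < r ^ S n) by (apply pow_lt; lra).
    assert (Hsum : incr_const * (r - r ^ S n) / (1 - r) + incr_const * r ^ S n
                   = incr_const * (r - r ^ S (S n)) / (1 - r)) by (simpl; field; lra).
    pose proof (Rmult_le_pos incr_const (r ^ S n) ltac:(lra) ltac:(lra)).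
    destruct (Nat.Even_or_Odd k') as [[k ->]|[k ->]].
    + rewrite dyadic_double; pose proof (IH k ltac:(simpl in Hk; lia) Hi); lra.
    + replace (2 * k + 1)%nat with (S (2 * k)) by lia.
      pose proof (dyadic_increment_le (S n) (2 * k) i ltac:(simpl in Hk |- *; lia) Hi) as Hinc.
      rewrite dyadic_double in Hinc; apply Rabs_le_between' in Hinc.
      pose proof (IH k ltac:(simpl in Hk; lia) Hi) as Hpar; apply Rabs_le_between in Hpar.
      apply Rabs_le_between; lra.
Qed.

Definition grid_bound : R := nrm d (v 0) + nrm d (v 1) + incr_const * r / (1 - r) + 1.

Lemma nrm_dyadic_le n k : (k <= Nat.pow 2 n)%nat -> nrm d (v (dyadic n k)) <= grid_bound.
Proof.
  intros Hk; destruct (rho_bounds alpha Ha) as [[Hr0 Hr1] _]; fold r in Hr0, Hr1.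
  destruct incr_const_spec as [HK0 _].
  pose proof (nrm_nonneg d (v 0)); pose proof (nrm_nonneg d (v 1)).
  pose proof (pow_lt r (S n) Hr0).
  assert (0 <= incr_const * (r - r ^ S n) / (1 - r) <= incr_const * r / (1 - r)).
  { unfold Rdiv; pose proof (Rinv_0_lt_compat (1 - r) ltac:(lra)).
    assert (r ^ n <= 1) by (rewrite <- (pow1 n); apply pow_incr; lra).
    assert (r ^ S n <= r) by (rewrite <- tech_pow_Rmult; nra).
    split; apply Rmult_le_compat_r || apply Rmult_le_pos; nra. }
  apply nrm_le; [unfold grid_bound; lra|].
  intros i Hi; eapply Rle_trans; [apply Rabs_dyadic_le; auto|].
  unfold grid_bound; lra.
Qed.

End Hoelder_grid.

Lemma is_derive_affine_on g ga gb a b P s :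
  a < s < b -> (forall u, a <= u <= b -> g u = ga + (gb - ga) * (u - a) * P) ->
  is_derive g s ((gb - ga) * P).
Proof.
  intros Hs Hg.
  apply is_derive_ext_loc with (fun u => ga + (gb - ga) * (u - a) * P).
  - assert (Hpos : 0 < Rmin (s - a) (b - s)) by (apply Rmin_pos; lra).
    exists (mkposreal _ Hpos); intros y Hy; symmetry; apply Hg.
    pose proof (Rmin_l (s - a) (b - s)); pose proof (Rmin_r (s - a) (b - s)).
    change (Rabs (y - s) < Rmin (s - a) (b - s)) in Hy; apply Rabs_lt_between in Hy; lra.
  - auto_derive; [exact I | ring].
Qed.

Lemma is_RInt_affine A B a c :
  is_RInt (fun s => A + B * (s - a)) a c (A * (c - a) + B * (c - a) ^ 2 / 2).
Proof.
  replace (A * (c - a) + B * (c - a) ^ 2 / 2)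
    with (minus (A * (c - a) + B * (c - a) ^ 2 / 2) (A * (a - a) + B * (a - a) ^ 2 / 2))
    by (unfold minus, plus, opp; simpl; rewrite Rminus_diag; field).
  apply (is_RInt_derive (fun s => A * (s - a) + B * (s - a) ^ 2 / 2)).
  - intros x _; auto_derive; [exact I | field].
  - intros x _; apply continuity_pt_filterlim; reg.
Qed.

Lemma is_RInt_affine_products d (Fi Gi : nat -> R -> R) (Fa Fb Ga Gb : nat -> R) a b c P :
  0 < P -> b = a + / P -> a <= c <= b ->
  (forall i s, (i < d)%nat -> a <= s <= b -> Fi i s = Fa i + (Fb i - Fa i) * (s - a) * P) ->
  (forall i s, (i < d)%nat -> a <= s <= b -> Gi i s = Ga i + (Gb i - Ga i) * (s - a) * P) ->
  is_RInt (fun s => sumd d (fun i => Fi i s * Derive (Gi i) s)) a c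
    ((c - a) * P * sumd d (fun i => Fa i * (Gb i - Ga i))
     + ((c - a) * P) ^ 2 / 2 * sumd d (fun i => (Fb i - Fa i) * (Gb i - Ga i))).
Proof.
  intros HP Hb Hc HF HG.
  set (A := P * sumd d (fun i => Fa i * (Gb i - Ga i))).
  set (B := P ^ 2 * sumd d (fun i => (Fb i - Fa i) * (Gb i - Ga i))).
  replace (_ + _) with (A * (c - a) + B * (c - a) ^ 2 / 2) by (unfold A, B; field).
  destruct (Req_dec c a) as [->|Hca].
  - replace (A * (a - a) + B * (a - a) ^ 2 / 2) with 0 by (rewrite Rminus_diag; field).
    exact (is_RInt_point _ a).
  - apply is_RInt_ext with (fun s => A + B * (s - a)); [|apply is_RInt_affine].
    intros s Hs; rewrite Rmin_left, Rmax_right in Hs by lra.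
    match goal with |- ?x = ?y => change (@eq R x y) end.
    transitivity (sumd d (fun i => P * (Fa i * (Gb i - Ga i))
                   + (s - a) * (P ^ 2 * ((Fb i - Fa i) * (Gb i - Ga i)))));
      [rewrite sumd_plus, !sumd_scal; unfold A, B; ring|].
    apply sumd_ext; intros i Hi.
    rewrite (is_derive_unique _ _ _
      (is_derive_affine_on (Gi i) (Ga i) (Gb i) a b P s ltac:(lra) (fun u Hu => HG i u Hi Hu))).
    rewrite HF by (auto; lra); ring.
Qed.

Lemma ex_nat_cell M y : 0 <= y < INR M -> exists j, (j < M)%nat /\ INR j <= y < INR (S j).
Proof.
  induction M as [|M IH]; intros Hy; [simpl in Hy; lra|].
  destruct (Rlt_dec y (INR M)) as [Hlt|Hge].
  - destruct IH as [j [Hj Hjy]]; [lra|]; exists j; split; [lia | exact Hjy].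
  - exists M; split; [lia | lra].
Qed.

Lemma ex_dyadic_cell_strict n s : 0 <= s < 1 ->
  exists j, (j < Nat.pow 2 n)%nat /\ dyadic n j <= s < dyadic n (S j).
Proof.
  intros Hs; pose proof (pow2_pos n).
  destruct (ex_nat_cell (Nat.pow 2 n) (s * 2 ^ n)) as [j [Hj Hjs]].
  { rewrite pow_INR; replace (INR 2) with 2 by (simpl; ring); nra. }
  exists j; split; [exact Hj|]; unfold dyadic, Rdiv.
  split; [apply Rmult_le_reg_r with (2 ^ n) | apply Rmult_lt_reg_r with (2 ^ n)];
    try rewrite Rmult_assoc, Rinv_l by lra; lra.
Qed.

Lemma ex_dyadic_cell n s : 0 <= s <= 1 ->
  exists j, (j < Nat.pow 2 n)%nat /\ dyadic n j <= s <= dyadic n (S j).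
Proof.
  intros Hs; destruct (Req_dec s 1) as [->|Hne].
  - pose proof (Nat.pow_nonzero 2 n ltac:(lia)).
    exists (Nat.pow 2 n - 1)%nat; split; [lia|].
    replace (S (Nat.pow 2 n - 1)) with (Nat.pow 2 n) by lia.
    rewrite dyadic_top, <- (dyadic_top n); split; [apply dyadic_le; lia | lra].
  - destruct (ex_dyadic_cell_strict n s ltac:(lra)) as [j [Hj Hjs]].
    exists j; split; [exact Hj | lra].
Qed.

Section SN_integral.
Variables (d N : nat) (v : R -> nat -> R) (DF : nat -> (nat -> R) -> R).

Definition SN_integrand (s : R) : R :=
  sumd d (fun i => SN (fun u => DF i (v u)) N s * Derive (SN (fun u => v u i) N) s).

Definition trapezoid_term (k : nat) : R :=
  let a := dyadic (S N) k in let b := dyadic (S N) (S k) in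
  sumd d (fun i => (DF i (v a) + DF i (v b)) / 2 * (v b i - v a i)).

Definition cell_integral (k : nat) (c : R) : R :=
  let a := dyadic (S N) k in let b := dyadic (S N) (S k) in
  let tau := (c - a) * 2 ^ S N in
  tau * sumd d (fun i => DF i (v a) * (v b i - v a i))
  + tau ^ 2 / 2 * sumd d (fun i => (DF i (v b) - DF i (v a)) * (v b i - v a i)).

Lemma is_RInt_cell k c : (k < Nat.pow 2 (S N))%nat ->
  dyadic (S N) k <= c <= dyadic (S N) (S k) ->
  is_RInt SN_integrand (dyadic (S N) k) c (cell_integral k c).
Proof.
  intros Hk Hc.
  apply (is_RInt_affine_products d _ _ _ _ _ _ _ (dyadic (S N) (S k)));
    [apply pow2_pos | apply dyadic_S | exact Hc | |]; intros i s Hi Hs;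
    [apply (SN_on_cell (fun u => DF i (v u))) | apply (SN_on_cell (fun u => v u i))];
    assumption.
Qed.

Lemma cell_integral_full k : cell_integral k (dyadic (S N) (S k)) = trapezoid_term k.
Proof.
  unfold cell_integral, trapezoid_term; cbv zeta.
  replace ((dyadic (S N) (S k) - dyadic (S N) k) * 2 ^ S N) with 1
    by (rewrite dyadic_S; field; apply pow_nonzero; lra).
  rewrite <- sumd_scal, <- sumd_scal, <- sumd_plus; apply sumd_ext; intros; field.
Qed.

Lemma is_RInt_grid k : (k <= Nat.pow 2 (S N))%nat ->
  is_RInt SN_integrand 0 (dyadic (S N) k) (sumd k trapezoid_term).
Proof.
  induction k as [|k IH]; intros Hk.
  - rewrite dyadic_0; exact (is_RInt_point _ 0).
  - assert (Hcell : is_RInt SN_integrand (dyadic (S N) k) (dyadic (S N) (S k))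
                        (trapezoid_term k)).
    { rewrite <- cell_integral_full; apply is_RInt_cell; [lia|].
      split; [apply dyadic_le; lia | lra]. }
    exact (is_RInt_Chasles _ _ _ _ _ _ (IH ltac:(lia)) Hcell).
Qed.

Lemma is_RInt_SN_integrand t k : (k < Nat.pow 2 (S N))%nat ->
  dyadic (S N) k <= t <= dyadic (S N) (S k) ->
  is_RInt SN_integrand 0 t (sumd k trapezoid_term + cell_integral k t).
Proof.
  intros Hk Ht.
  exact (is_RInt_Chasles _ _ _ _ _ _ (is_RInt_grid k ltac:(lia)) (is_RInt_cell k t Hk Ht)).
Qed.

(* [SN (v . i) N] is differentiable off the level-[N + 1] grid; the grid points are the
   finitely many exceptions allowed by [IntFdG]. *)
Lemma IntFdG_SN t : 0 <= t <= 1 ->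
  IntFdG d (SNv (fun s i => DF i (v s)) N) (SNv v N) t (RInt SN_integrand 0 t).
Proof.
  intros Ht; destruct (ex_dyadic_cell (S N) t Ht) as [k [Hk Htk]].
  assert (Hex : ex_RInt SN_integrand 0 t)
    by (eexists; apply is_RInt_SN_integrand; eassumption).
  exists (fun s i => Derive (SN (fun u => v u i) N) s),
         (map (dyadic (S N)) (seq 0 (S (Nat.pow 2 (S N))))); split.
  - intros s Hs Hgrid i Hi.
    destruct (ex_dyadic_cell_strict (S N) s ltac:(lra)) as [j [Hj Hsj]].
    assert (Hne : s <> dyadic (S N) j)
      by (intros ->; apply Hgrid, in_map, in_seq; lia).
    assert (D : is_derive (SN (fun u => v u i) N) s
                  ((v (dyadic (S N) (S j)) i - v (dyadic (S N) j) i) * 2 ^ S N)).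
    { apply (is_derive_affine_on _ _ _ (dyadic (S N) j) (dyadic (S N) (S j))); [lra|].
      intros u Hu; apply (SN_on_cell (fun u => v u i)); assumption. }
    apply is_derive_Reals; rewrite (is_derive_unique _ _ _ D); exact D.
  - exists (ex_RInt_Reals_0 _ _ _ Hex); rewrite <- RInt_Reals; reflexivity.
Qed.

End SN_integral.

Lemma RInt_SN_integrand_error d N v DF (F : (nat -> R) -> R) t k :
  (k < Nat.pow 2 (S N))%nat -> dyadic (S N) k <= t <= dyadic (S N) (S k) ->
  RInt (SN_integrand d N v DF) 0 t - (F (v t) - F (v 0)) =
  cell_integral d N v DF k t - (F (v t) - F (v (dyadic (S N) k)))
  - sumd k (fun j => F (v (dyadic (S N) (S j))) - F (v (dyadic (S N) j))
                     - trapezoid_term d N v DF j).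
Proof.
  intros Hk Ht; rewrite (is_RInt_unique _ _ _ _ (is_RInt_SN_integrand d N v DF t k Hk Ht)).
  rewrite sumd_minus, (sumd_telescope k (fun j => F (v (dyadic (S N) j)))), dyadic_0; ring.
Qed.

Lemma Rabs_cell_integral_le d N v DF k c (x0 : nat -> R) M :
  dyadic (S N) k <= c <= dyadic (S N) (S k) ->
  (forall i, (i < d)%nat -> Rabs (DF i (v (dyadic (S N) k)) - DF i x0) <= 1) ->
  (forall i, (i < d)%nat -> Rabs (DF i (v (dyadic (S N) (S k))) - DF i x0) <= 1) ->
  (forall i, (i < d)%nat ->
     Rabs (v (dyadic (S N) (S k)) i - v (dyadic (S N) k) i) <= M) ->
  Rabs (cell_integral d N v DF k c) <= sumd d (fun i => Rabs (DF i x0) + 3) * M.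
Proof.
  intros Hc Ha Hb Hinc; unfold cell_integral; cbv zeta.
  set (a := dyadic (S N) k) in *; set (b := dyadic (S N) (S k)) in *.
  set (tau := (c - a) * 2 ^ S N).
  assert (Htau : 0 <= tau <= 1).
  { pose proof (pow2_pos (S N)); pose proof (dyadic_S (S N) k) as Hb'; fold a b in Hb'.
    unfold tau; split; [nra|].
    apply Rle_trans with ((b - a) * 2 ^ S N); [nra|].
    right; rewrite Hb'; field; lra. }
  assert (Htau2 : 0 <= tau ^ 2 / 2 <= 1) by (simpl; split; nra).
  eapply Rle_trans; [apply Rabs_triang|]; rewrite !Rabs_mult.
  rewrite (Rabs_right tau), (Rabs_right (tau ^ 2 / 2)) by lra.
  eapply Rle_trans with (sumd d (fun i => Rabs (DF i (v a) * (v b i - v a i)))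
                         + sumd d (fun i => Rabs ((DF i (v b) - DF i (v a)) * (v b i - v a i)))).
  { pose proof (Rabs_sumd_le d (fun i => DF i (v a) * (v b i - v a i))).
    pose proof (Rabs_sumd_le d (fun i => (DF i (v b) - DF i (v a)) * (v b i - v a i))).
    pose proof (Rabs_pos (sumd d (fun i => DF i (v a) * (v b i - v a i)))).
    pose proof (Rabs_pos (sumd d (fun i => (DF i (v b) - DF i (v a)) * (v b i - v a i)))).
    nra. }
  rewrite <- sumd_plus, Rmult_comm, <- sumd_scal; apply sumd_le; intros i Hi.
  specialize (Ha i Hi); specialize (Hb i Hi); specialize (Hinc i Hi).
  apply Rabs_le_between' in Ha, Hb; rewrite !Rabs_mult.
  assert (Rabs (DF i (v a)) + Rabs (DF i (v b) - DF i (v a)) <= Rabs (DF i x0) + 3)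
    by (unfold Rabs; repeat destruct Rcase_abs; lra).
  pose proof (Rabs_pos (v b i - v a i)); pose proof (Rabs_pos (DF i (v a))).
  pose proof (Rabs_pos (DF i (v b) - DF i (v a))); nra.
Qed.

Lemma pow_lt_eventually q y : 0 <= q < 1 -> y > 0 ->
  exists N0, forall n, (n >= N0)%nat -> q ^ n < y.
Proof.
  intros Hq Hy; destruct (pow_lt_1_zero q ltac:(rewrite Rabs_right; lra) y Hy) as [N0 H].
  exists N0; intros n Hn; eapply Rle_lt_trans; [apply Rle_abs | exact (H n Hn)].
Qed.

Lemma continuous_on01_nrm d (v : R -> nat -> R) t :
  (forall i, (i < d)%nat -> continuous_on01 (fun s => v s i)) -> 0 <= t <= 1 ->
  forall e, e > 0 -> exists del, del > 0 /\
    forall s, 0 <= s <= 1 -> Rabs (s - t) < del -> nrm d (vsub (v s) (v t)) < e.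
Proof.
  intros Hc Ht e He.
  destruct (ex_uniform_delta d (fun i del => forall s, 0 <= s <= 1 -> Rabs (s - t) < del ->
              Rabs (v s i - v t i) < e / 2)) as [del [Hdel H]].
  - intros i Hi; apply (Hc i Hi t Ht (e / 2)); lra.
  - intros i del del' H1 H2 s Hs Hst; apply H1; [exact Hs | lra].
  - exists del; split; [exact Hdel|]; intros s Hs Hst.
    apply Rle_lt_trans with (e / 2); [|lra].
    apply nrm_le; [lra|]; intros i Hi; left; apply H; assumption.
Qed.

Lemma Rpower_geometric_scaling K r eps Ct n : 0 < K -> 0 < r ->
  2 ^ n * (Ct * Rpower (K * r ^ n) eps * (K * r ^ n) ^ 2)
  = Ct * Rpower K eps * K ^ 2 * (2 * Rpower r eps * r ^ 2) ^ n.
Proof.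
  intros HK Hr.
  rewrite <- (Rpower_mult_distr K (r ^ n)) by (try apply pow_lt; lra).
  rewrite <- (Rpower_pow n r), Rpower_mult by lra.
  replace (INR n * eps) with (eps * INR n) by ring.
  rewrite <- Rpower_mult, (Rpower_pow n r), Rpower_pow by (try apply Rpower_pos; lra).
  rewrite !Rpow_mult_distr, <- !pow_mult, Nat.mul_comm, pow_mult; ring.
Qed.

Lemma Rmult_lt_of_lt_div_succ a b c : 0 <= a -> 0 <= b -> b < c / (a + 1) -> a * b < c.
Proof.
  intros Ha Hb Hbc; apply Rle_lt_trans with ((a + 1) * b); [nra|].
  apply Rmult_lt_reg_r with (/ (a + 1)); [apply Rinv_0_lt_compat; lra|].
  replace ((a + 1) * b * / (a + 1)) with b by (field; lra); exact Hbc.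
Qed.

Section Convergence.
Variables (d : nat) (alpha eps C : R) (v : R -> nat -> R) (F : (nat -> R) -> R)
  (DF : nat -> (nat -> R) -> R) (D2F : nat -> nat -> (nat -> R) -> R).
Hypothesis Ha : 0 < alpha < 1.
Hypothesis HC : forall p m : nat, (m <= Nat.pow 2 p)%nat ->
  Rpower 2 (INR p * alpha) * nrm d (coefv v p m) <= C.
Hypothesis Hcont : forall i, (i < d)%nat -> continuous_on01 (fun t => v t i).
Hypothesis Heps : eps > 0.
Hypothesis Hexp : (2 + eps) * alpha > 1.
Hypothesis HF : C2eps d eps F DF D2F.

Let r := rho alpha.
Let K := incr_const alpha C.
(* [2 ^ n] cells at level [n], each with a trapezoid error of order [(K r ^ n) ^ (2 + eps)] *)
Let q := 2 * Rpower r eps * r ^ 2.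

Lemma trapezoid_ratio_bounds : 0 < q < 1.
Proof.
  unfold q, r, rho; pose proof (Rpower_pos 2 (- alpha)); split.
  - pose proof (Rpower_pos (Rpower 2 (- alpha)) eps).
    apply Rmult_lt_0_compat; [lra | apply pow_lt; lra].
  - rewrite Rpower_mult; simpl; rewrite Rmult_1_r.
    rewrite <- (Rpower_1 2) at 1 by lra; rewrite <- !Rpower_plus.
    apply Rlt_le_trans with (Rpower 2 0); [apply Rpower_lt; nra | right; apply Rpower_O; lra].
Qed.

Lemma trapezoid_errors_le : exists Ka, 0 <= Ka /\ forall N k, (k <= Nat.pow 2 (S N))%nat ->
  Rabs (sumd k (fun j => F (v (dyadic (S N) (S j))) - F (v (dyadic (S N) j))
                         - trapezoid_term d N v DF j)) <= Ka * q ^ S N.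
Proof.
  destruct (rho_bounds alpha Ha) as [[Hr0 Hr1] _]; fold r in Hr0, Hr1.
  destruct (incr_const_spec d alpha C v Ha HC) as [HK _]; fold K in HK.
  assert (HB : grid_bound d alpha C v > 0).
  { unfold grid_bound; fold r K; pose proof (nrm_nonneg d (v 0)).
    pose proof (nrm_nonneg d (v 1)).
    assert (0 <= K * r / (1 - r)) by (apply Rdiv_le_0_compat; nra); lra. }
  destruct (C2eps_trapezoid_error d eps F DF D2F HF Heps _ HB) as [Ct [HCt0 HCt]].
  exists (Ct * Rpower K eps * K ^ 2); split.
  { pose proof (Rpower_pos K eps); apply Rmult_le_pos; [apply Rmult_le_pos|apply pow_le]; lra. }
  intros N k Hk; set (n := S N) in *.
  set (M := K * r ^ n); assert (HM : 0 < M) by (apply Rmult_lt_0_compat, pow_lt; lra).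
  unfold q; rewrite <- (Rpower_geometric_scaling K r eps Ct n) by lra; fold M.
  apply Rle_trans with (INR k * (Ct * Rpower M eps * M ^ 2)).
  - apply Rabs_sumd_le_const; intros j Hj; unfold trapezoid_term; fold n.
    assert (Hstep : nrm d (vsub (v (dyadic n (S j))) (v (dyadic n j))) <= M).
    { apply nrm_le; [lra|]; intros i Hi; apply (dyadic_increment_le d alpha C v Ha HC);
        [lia | exact Hi]. }
    pose proof (nrm_nonneg d (vsub (v (dyadic n (S j))) (v (dyadic n j)))).
    eapply Rle_trans; [apply HCt; apply (nrm_dyadic_le d alpha C v Ha HC); lia|].
    apply Rmult_le_compat; [apply Rmult_le_pos; [lra | apply rpow_nonneg] | apply pow_le; lra | |
                            apply pow_incr; lra].
    apply Rmult_le_compat_l; [lra|]; rewrite <- rpow_pos_eq by exact HM.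
    apply rpow_le_compat; lra.
  - assert (INR k <= 2 ^ n).
    { replace (2 ^ n) with (INR (Nat.pow 2 n)) by (rewrite pow_INR; reflexivity).
      apply le_INR; exact Hk. }
    pose proof (Rpower_pos M eps).
    apply Rmult_le_compat_r; [apply Rmult_le_pos; [apply Rmult_le_pos|apply pow_le]; lra | lra].
Qed.

Lemma F_DF_comp_v_near t e : 0 <= t <= 1 -> e > 0 ->
  exists del, del > 0 /\ forall s, 0 <= s <= 1 -> Rabs (s - t) < del ->
    Rabs (F (v s) - F (v t)) < e /\
    forall i, (i < d)%nat -> Rabs (DF i (v s) - DF i (v t)) < 1.
Proof.
  intros Ht He; destruct HF as [HF1 [HDF _]].
  destruct (FrechetD_continuous d F DF HF1 (v t) e He) as [d1 [Hd1 HFt]].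
  destruct (ex_uniform_delta d (fun i del => forall y, nrm d (vsub y (v t)) < del ->
              Rabs (DF i y - DF i (v t)) < 1)) as [d2 [Hd2 HDFt]].
  { intros i Hi; apply (FrechetD_continuous d (DF i) (D2F i) (HDF i Hi)); lra. }
  { intros i del del' Hdel Hdel' y Hy; apply Hdel; lra. }
  destruct (continuous_on01_nrm d v t Hcont Ht (Rmin d1 d2)) as [del [Hdel Hvt]];
    [apply Rmin_pos; lra|].
  pose proof (Rmin_l d1 d2); pose proof (Rmin_r d1 d2).
  exists del; split; [exact Hdel|]; intros s Hs Hst.
  specialize (Hvt s Hs Hst); split; [apply HFt; lra | intros i Hi; apply HDFt; [exact Hi | lra]].
Qed.

Lemma SN_integral_cvg t : 0 <= t <= 1 ->
  Un_cv (fun N => RInt (SN_integrand d N v DF) 0 t) (F (v t) - F (v 0)).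
Proof.
  intros Ht e He.
  destruct (rho_bounds alpha Ha) as [[Hr0 Hr1] _]; fold r in Hr0, Hr1.
  destruct (incr_const_spec d alpha C v Ha HC) as [HK _]; fold K in HK.
  destruct trapezoid_errors_le as [Ka [HKa0 HKa]].
  destruct trapezoid_ratio_bounds as [Hq0 Hq1].
  destruct (F_DF_comp_v_near t (e / 3) Ht ltac:(lra)) as [del [Hdel Hnear]].
  set (D0 := sumd d (fun i => Rabs (DF i (v t)) + 3)).
  assert (HD0 : 0 <= D0).
  { apply sumd_nonneg; intros i _; pose proof (Rabs_pos (DF i (v t))); lra. }
  destruct (pow_lt_eventually q (e / 3 / (Ka + 1))) as [N1 HN1];
    [lra | apply Rdiv_lt_0_compat; lra|].
  destruct (pow_lt_eventually (/ 2) del) as [N2 HN2]; [lra | exact Hdel|].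
  destruct (pow_lt_eventually r (e / 3 / (D0 * K + 1))) as [N3 HN3];
    [lra | apply Rdiv_lt_0_compat; nra|].
  exists (max N1 (max N2 N3)); intros N HN; set (n := S N).
  destruct (ex_dyadic_cell n t Ht) as [k [Hk Htk]].
  unfold R_dist; rewrite (RInt_SN_integrand_error d N v DF F t k Hk Htk); fold n.
  pose proof (dyadic_S n k) as Hab.
  set (a := dyadic n k) in *; set (b := dyadic n (S k)) in *.
  specialize (HN2 n ltac:(lia)); rewrite pow_inv in HN2.
  assert (Ha0 : 0 <= a) by (unfold a; rewrite <- (dyadic_0 n); apply dyadic_le; lia).
  assert (Hb1 : b <= 1) by (unfold b; rewrite <- (dyadic_top n); apply dyadic_le; lia).
  destruct (Hnear a ltac:(lra) ltac:(apply Rabs_lt_between; lra)) as [HFa HDFa].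
  destruct (Hnear b ltac:(lra) ltac:(apply Rabs_lt_between; lra)) as [_ HDFb].
  assert (Eerr : Rabs (sumd k (fun j => F (v (dyadic n (S j))) - F (v (dyadic n j))
                                        - trapezoid_term d N v DF j)) < e / 3).
  { eapply Rle_lt_trans; [apply HKa, Nat.lt_le_incl, Hk|].
    apply Rmult_lt_of_lt_div_succ; [lra | apply pow_le; lra | apply HN1; lia]. }
  assert (EF : Rabs (F (v t) - F (v a)) < e / 3) by (rewrite Rabs_minus_sym; exact HFa).
  assert (Ecell : Rabs (cell_integral d N v DF k t) < e / 3).
  { eapply Rle_lt_trans; [apply (Rabs_cell_integral_le d N v DF k t (v t) (K * r ^ n))|].
    - exact Htk.
    - intros i Hi; left; apply HDFa, Hi.
    - intros i Hi; left; apply HDFb, Hi.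
    - intros i Hi; apply (dyadic_increment_le d alpha C v Ha HC); assumption.
    - fold D0; rewrite <- Rmult_assoc.
      apply Rmult_lt_of_lt_div_succ; [nra | apply pow_le; lra | apply HN3; lia]. }
  apply Rabs_lt_between in Eerr, EF, Ecell; apply Rabs_lt_between; lra.
Qed.

End Convergence.

Theorem mainTheorem14 :
  forall (d : nat) (alpha eps : R) (v : R -> nat -> R)
    (F : (nat -> R) -> R) (DF : nat -> (nat -> R) -> R)
    (D2F : nat -> nat -> (nat -> R) -> R),
    1 / 3 < alpha < 1 ->
    CalphaV d alpha v ->
    eps > 0 ->
    (2 + eps) * alpha > 1 ->
    C2eps d eps F DF D2F ->
    forall t, 0 <= t <= 1 ->
      exists I : nat -> R,
        (forall N : nat,
           IntFdG d (SNv (fun s i => DF i (v s)) N) (SNv v N) t (I N)) /\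
        Un_cv I (F (v t) - F (v 0)).
Proof.
  intros d alpha eps v F DF D2F Ha [Hcont [C [_ HC]]] Heps Hexp HF t Ht.
  exists (fun N => RInt (SN_integrand d N v DF) 0 t); split.
  - intros N; apply IntFdG_SN; exact Ht.
  - apply (SN_integral_cvg d alpha eps C v F DF D2F); auto; lra.
Qed.
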